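(* Let $M$ be a connected matroid on $E$, and let $\mathfrak{S}\subseteq\mathcal{P}(E)$ be a collection such that (i) $\mathfrak{S}$ contains every set $S\subseteq E$ for which both $M|_S$ and $M/S$ are connected, and (ii) whenever $S\in\mathfrak{S}$, every connected component of $M|_S$ is also in $\mathfrak{S}$. Then $\mathrm{ec}_{\mathfrak{S}}(M)=\mathrm{ec}(M)$.
   Context: $M$ has rank $k$. A matroid is connected if it is not a direct sum of two matroids on nonempty sets; its connected components are the ground sets of the connected summands in its decomposition into connected matroids. $M|_S$ is the restriction and $M/S$ the contraction (on $E-S$, with $\mathrm{rk}_{M/S}(A)=\mathrm{rk}(A\cup S)-\mathrm{rk}(S)$). For $\mathfrak{S}\subseteq\mathcal{P}(E)$ and $S\in\mathfrak{S}$, $c(S)=\#S-\mathrm{rk}\,S$, $a_{\mathfrak{S}}(S)=c(S)-\sum_{T\in\mathfrak{S},\,T\subsetneq S}a_{\mathfrak{S}}(T)$ (recursively, $a_{\mathfrak{S}}(\varnothing)=0$), $\mathrm{ec}_{\mathfrak{S}}(M)=\sum_{S\in\mathfrak{S}}(k-\mathrm{rk}\,S)a_{\mathfrak{S}}(S)$, and $\mathrm{ec}(M)=\mathrm{ec}_{\mathcal{P}(E)}(M)$. *)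

From mathcomp Require Import all_boot all_order all_algebra.
Set Implicit Arguments. Unset Strict Implicit. Unset Printing Implicit Defensive.
Import GRing.Theory Num.Theory.

Section Matroid.
Variable E : finType.

Definition is_matroid_rank (rk : {set E} -> nat) : Prop :=
  [/\ forall A : {set E}, rk A <= #|A|,
      forall A B : {set E}, A \subset B -> rk A <= rk B
    & forall A B : {set E}, rk (A :|: B) + rk (A :&: B) <= rk A + rk B].

(* The matroid with rank function f on ground set G (only subsets of G matter)
   is a direct sum of matroids on the nonempty sets S and T. *)
Definition direct_sum_split (f : {set E} -> nat) (G S T : {set E}) : Prop :=
  [/\ S != set0, T != set0, S :&: T = set0, S :|: T = G
    & forall A : {set E}, A \subset G -> f A = f (A :&: S) + f (A :&: T)].

Definition connected_on (f : {set E} -> nat) (G : {set E}) : Prop :=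
  ~ exists S T : {set E}, direct_sum_split f G S T.

Definition restr_connected (rk : {set E} -> nat) (S : {set E}) : Prop :=
  connected_on rk S.

Definition contr_rank (rk : {set E} -> nat) (S : {set E}) : {set E} -> nat :=
  fun A => rk (A :|: S) - rk S.

Definition contr_connected (rk : {set E} -> nat) (S : {set E}) : Prop :=
  connected_on (contr_rank rk S) (~: S).

Definition connected_decomposition (f : {set E} -> nat) (G : {set E})
    (P : {set {set E}}) : Prop :=
  [/\ partition P G,
      forall A : {set E}, A \subset G -> f A = \sum_(B in P) f (A :&: B)
    & forall B, B \in P -> connected_on f B].

Definition component_of_restr (rk : {set E} -> nat) (S C : {set E}) : Prop :=
  exists P : {set {set E}}, connected_decomposition rk S P /\ C \in P.

Definition nullity (rk : {set E} -> nat) (S : {set E}) : int :=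
  (#|S|%:Z - (rk S)%:Z)%R.

Fixpoint a_aux (rk : {set E} -> nat) (Sf : {set {set E}}) (n : nat)
    (S : {set E}) : int :=
  match n with
  | 0 => 0%R
  | n'.+1 => (nullity rk S - \sum_(T in Sf | T \proper S) a_aux rk Sf n' T)%R
  end.

Definition a_coef (rk : {set E} -> nat) (Sf : {set {set E}}) (S : {set E}) : int :=
  a_aux rk Sf #|S|.+1 S.

Definition ec_of (rk : {set E} -> nat) (Sf : {set {set E}}) : int :=
  (\sum_(S in Sf) ((rk setT)%:Z - (rk S)%:Z) * a_coef rk Sf S)%R.

Definition ec (rk : {set E} -> nat) : int := ec_of rk setT.

End Matroid.

(* The coefficients a_S(T) are the Moebius coefficients of the nullity c over the family S.
   If M|_T is disconnected, c is additive over the components of M|_T, these components lie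
   in S by (ii), and every connected subset of T lies in a single component; hence
   a_S(T) = 0, and only sets with connected restriction contribute to ec_S.
   Exchanging the two summations, ec_F = sum_U c(U) b_F(U), where b_F are the upward Moebius
   coefficients of the corank k - rk. If M|_U is connected but M/U is not, the corank of U
   is the sum of the coranks of the sets E - D over the components D of M/U; each E - D has
   connected restriction (as M is connected) and connected contraction, and for every
   V containing U with M/V connected, E - V lies in a single D. So b_F is supported on the
   family K of sets U with M|_U and M/U connected, and ec_F = ec_K whenever F lies between
   K and the sets with connected restriction; by (i) this applies both to S and to P(E). *)

From mathcomp Require Import all_boot all_order all_algebra.
From mathcomp Require Import zify boolp.
Set Implicit Arguments. Unset Strict Implicit. Unset Printing Implicit Defensive.
Import GRing.Theory Num.Theory.

Section Moebius.
Variables (E : finType) (R : zmodType).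
Implicit Types (f : {set E} -> R) (F : {set {set E}}) (S T : {set E}).
Local Open Scope ring_scope.

Fixpoint moebius_rec f F n S : R :=
  if n is n'.+1 then f S - \sum_(T in F | T \proper S) moebius_rec f F n' T else 0.

Definition moebius f F S := moebius_rec f F #|S|.+1 S.

Lemma moebius_rec_fuel f F n m S :
  (#|S| < n)%N -> (#|S| < m)%N -> moebius_rec f F n S = moebius_rec f F m S.
Proof.
elim: n m S => [|n IH] [|m] S //= hn hm; congr (_ - _).
apply: eq_bigr => T /andP[_ /proper_card hT]; apply: IH; lia.
Qed.

Lemma moebiusE f F S : moebius f F S = f S - \sum_(T in F | T \proper S) moebius f F T.
Proof.
congr (_ - _); apply: eq_bigr => T /andP[_ /proper_card hT].
apply: moebius_rec_fuel; lia.
Qed.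

Lemma sum_moebius f F S : S \in F -> \sum_(T in F | T \subset S) moebius f F T = f S.
Proof.
move=> SF; rewrite (bigD1 S) /=; last by rewrite SF subxx.
rewrite [moebius f F S]moebiusE (eq_bigl (fun T => (T \in F) && (T \proper S))) ?subrK //.
by move=> T; rewrite properEneq andbAC -andbA.
Qed.

Lemma moebius_subfamily f F1 F2 : F1 \subset F2 ->
    {in F2, forall S, S \notin F1 -> moebius f F2 S = 0} ->
  moebius f F1 =1 moebius f F2.
Proof.
move=> F12 F2_0 S; elim: {S}_.+1 {-2}S (ltnSn #|S|) => // n IH S hS.
rewrite moebiusE [RHS]moebiusE; congr (_ - _).
rewrite big_mkcond [RHS]big_mkcond; apply: eq_bigr => T _.
have [TF1 | TnF1] := boolP (T \in F1); rewrite /= ?(subsetP F12 _ TF1).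
  by case: ifP => // /proper_card lt_TS; apply: IH; lia.
by case: ifP => // /andP[TF2 _]; rewrite F2_0.
Qed.

Lemma moebius_eq0 f F (good : {set E} -> Prop) :
    f set0 = 0 ->
    (forall S, S \in F -> ~ good S -> S != set0 ->
       exists P : {set {set E}}, [/\ partition P S,
          {in P, forall B, (B \in F) && (B \proper S)},
          f S = \sum_(B in P) f B &
          forall T, T \in F -> T \proper S -> good T -> T != set0 ->
            exists2 B, B \in P & T \subset B]) ->
  forall S, S \in F -> moebius f F S != 0 -> good S /\ S != set0.
Proof.
move=> f0 split_bad S; elim: {S}_.+1 {-2}S (ltnSn #|S|) => // n IH S hS SF mS.
have S0 : S != set0.
  apply: contra mS => /eqP ->; rewrite moebiusE big1 ?f0 ?subr0 // => T.
  by case/andP=> _ /proper_card; rewrite cards0.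
have [//|badS] := pselect (good S).
have [P [partP PF fS P_cover]] := split_bad S SF badS S0.
case/negP: mS; apply/eqP; rewrite moebiusE.
(* The sets T with a nonzero coefficient below S are good, so each lies in exactly one block. *)
have -> : \sum_(T in F | T \proper S) moebius f F T =
          \sum_(B in P) \sum_(T in F | T \subset B) moebius f F T.
  rewrite (exchange_big_dep (mem F)) /=; last by move=> B T _ /andP[].
  rewrite big_mkcondr; apply: eq_bigr => T TF.
  have [-> | T0] := eqVneq (moebius f F T) 0; first by rewrite big1 //; case: ifP.
  case TS: (T \proper S); last first.
    rewrite big1 // => B /andP[BP /andP[_ TB]].
    by have /andP[_ BS] := PF B BP; rewrite (sub_proper_trans TB BS) in TS.
  have [goodT Tn0] := IH T (leq_trans (proper_card TS) hS) TF T0.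
  have [B0 B0P TB0] := P_cover T TF TS goodT Tn0.
  rewrite (big_pred1 B0) // => B /=; rewrite TF /=.
  have [-> | BB0] := eqVneq B B0; first by rewrite B0P TB0.
  apply/negbTE/andP => -[BP TB].
  have := trivIsetP (partition_trivIset partP) _ _ BP B0P BB0.
  rewrite -setI_eq0 => /eqP BB00.
  by move: Tn0; rewrite -subset0 -BB00 subsetI TB TB0.
rewrite fS -sumrB big1 // => B BP.
by have /andP[BF _] := PF B BP; rewrite sum_moebius ?subrr.
Qed.

End Moebius.

Definition compl_family (E : finType) (F : {set {set E}}) : {set {set E}} :=
  [set A | ~: A \in F].

Lemma mem_compl_family (E : finType) (F : {set {set E}}) A :
  (A \in compl_family F) = (~: A \in F).
Proof. by rewrite inE. Qed.

Lemma compl_familyS (E : finType) (F1 F2 : {set {set E}}) :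
  F1 \subset F2 -> compl_family F1 \subset compl_family F2.
Proof. by move=> F12; apply/subsetP => A; rewrite !mem_compl_family; apply: (subsetP F12). Qed.

Section MoebiusSums.
Variables (E : finType) (R : comRingType).
Implicit Types (f w : {set E} -> R) (F : {set {set E}}).
Local Open Scope ring_scope.

Lemma sum_mul_moebius_subfamily w f F1 F2 : F1 \subset F2 ->
    {in F2, forall S, S \notin F1 -> moebius f F2 S = 0} ->
  \sum_(S in F2) w S * moebius f F2 S = \sum_(S in F1) w S * moebius f F1 S.
Proof.
move=> F12 F2_0; rewrite (big_setID F1) /= (setIidPr F12) [X in _ + X]big1 ?addr0.
  by apply: eq_bigr => S _; rewrite (moebius_subfamily F12 F2_0).
by move=> S; rewrite inE => /andP[SnF1 SF2]; rewrite F2_0 ?mulr0.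
Qed.

Lemma sum_mul_moebius_compl f w F :
  \sum_(S in F) w S * moebius f F S =
  \sum_(A in compl_family F)
     f (~: A) * moebius (fun A => w (~: A)) (compl_family F) A.
Proof.
set G := compl_family F; set b := moebius _ G.
transitivity (\sum_(S in F) \sum_(A in G | A \subset ~: S) b A * moebius f F S).
  apply: eq_bigr => S SF; rewrite -mulr_suml sum_moebius ?mem_compl_family ?setCK //.
rewrite (exchange_big_dep (mem G)) /=; last by move=> S A _ /andP[].
apply: eq_bigr => A AG; rewrite -mulr_sumr mulrC -(@sum_moebius _ _ f F (~: A)) -?mem_compl_family //.
by congr (_ * _); apply: eq_bigl => S; rewrite AG subsetC.
Qed.

End MoebiusSums.

(* Decides a boolean set identity or inclusion pointwise, using the set equalities and inclusions in the context. *)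
Ltac set_tauto :=
  let x := fresh "x" in
  match goal with
  | |- @eq _ _ _ => apply/setP => x
  | |- is_true (_ \subset _) => apply/subsetP => x
  end;
  repeat match goal with
  | H : is_true (_ \subset _) |- _ => move: (subsetP H x) => /implyP; clear H
  | H : @eq _ _ _ |- _ => move/setP: (H) => /(_ x); clear H
  end;
  rewrite ?inE; by repeat case: (_ \in _).

Section Connectedness.
Variable E : finType.
Implicit Types (f g : {set E} -> nat) (G S T A B : {set E}) (P : {set {set E}}).

Lemma connected_on_eq f g G : (forall A, A \subset G -> f A = g A) ->
  connected_on f G -> connected_on g G.
Proof.
move=> fg Gconn [S [T [S0 T0 ST0 STG gST]]]; apply: Gconn.
exists S, T; split => // A AG; have AS : A :&: S \subset G by set_tauto.
have AT : A :&: T \subset G by set_tauto.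
by rewrite fg // fg // fg // gST.
Qed.

Lemma connected_within_split f T S1 S2 : connected_on f T ->
    (forall A, A \subset T -> f A = f (A :&: S1) + f (A :&: S2)) ->
    S1 :&: S2 = set0 -> T \subset S1 :|: S2 -> T :&: S1 != set0 ->
  T \subset S1.
Proof.
move=> Tconn fS12 S12 TS12 TS1; apply/negPn/negP => TnS1; apply: Tconn.
exists (T :&: S1), (T :&: S2); split => //; try set_tauto.
- have [x xT xnS1] := subsetPn TnS1; apply/set0Pn; exists x.
  by rewrite inE xT; move: (subsetP TS12 x xT); rewrite inE (negbTE xnS1).
- by move=> A AT; rewrite fS12 //; congr (f _ + f _); set_tauto.
Qed.

Lemma connected_decomposition_split f G P B :
    f set0 = 0 -> connected_decomposition f G P -> B \in P ->
  forall A, A \subset G -> f A = f (A :&: B) + f (A :&: (G :\: B)).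
Proof.
move=> f0 [partP fP _] BP A AG; have BG := partitionS partP BP.
rewrite (fP A AG) (bigD1 B) //=; congr (_ + _).
have AGB : A :&: (G :\: B) \subset G by set_tauto.
rewrite (fP _ AGB) [RHS](bigD1 B) //=.
have -> : A :&: (G :\: B) :&: B = set0 by set_tauto.
rewrite f0 add0n; apply: eq_bigr => B' /andP[B'P B'B]; congr f.
have B'G := partitionS partP B'P.
have := trivIsetP (partition_trivIset partP) _ _ B'P BP B'B.
by rewrite -setI_eq0 => /eqP B'B0; set_tauto.
Qed.

Lemma connected_in_block f G P T : f set0 = 0 -> connected_decomposition f G P ->
  connected_on f T -> T \subset G -> T != set0 -> exists2 B, B \in P & T \subset B.
Proof.
move=> f0 decP Tconn TG /set0Pn [x xT].
have [partP _ _] := decP.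
have xP : x \in cover P by rewrite (cover_partition partP) (subsetP TG).
exists (pblock P x); first exact: pblock_mem.
apply: (connected_within_split (S2 := G :\: pblock P x) Tconn); try set_tauto.
  move=> A AT; apply: (connected_decomposition_split f0 decP (pblock_mem xP)).
  by set_tauto.
by apply/set0Pn; exists x; rewrite inE xT mem_pblock.
Qed.

Lemma connected_decomposition_union f G S T P1 P2 : direct_sum_split f G S T ->
    connected_decomposition f S P1 -> connected_decomposition f T P2 ->
  connected_decomposition f G (P1 :|: P2).
Proof.
move=> [_ _ ST0 STG fST] [partP1 fP1 connP1] [partP2 fP2 connP2].
have P12 : [disjoint P1 & P2].
  rewrite -setI_eq0; apply/eqP/setP => B; rewrite !inE.
  apply/negbTE/andP => -[BP1 BP2].
  have : B \subset set0 by rewrite -ST0 subsetI (partitionS partP1) ?(partitionS partP2).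
  by rewrite subset0 (negbTE (partition_neq0 partP1 BP1)).
split.
- case/and3P: partP1 => /eqP cov1 triv1 n01; case/and3P: partP2 => /eqP cov2 triv2 n02.
  apply/and3P; split.
  + by rewrite /cover bigcup_setU -/(cover P1) -/(cover P2) cov1 cov2 STG.
  + by apply: trivIsetU => //; rewrite cov1 cov2 -setI_eq0 ST0.
  + by rewrite in_setU negb_or n01 n02.
- move=> A AG; rewrite fST // (eq_bigl (mem [predU P1 & P2])); last first.
    by move=> B; rewrite !inE.
  rewrite bigU //; congr (_ + _).
  + rewrite fP1 ?subsetIr //; apply: eq_bigr => B BP1; congr f.
    by have BS := partitionS partP1 BP1; set_tauto.
  + rewrite fP2 ?subsetIr //; apply: eq_bigr => B BP2; congr f.
    by have BS := partitionS partP2 BP2; set_tauto.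
- by move=> B; rewrite inE => /orP[]; [apply: connP1 | apply: connP2].
Qed.

Lemma connected_decomposition_exists f G :
  f set0 = 0 -> exists P, connected_decomposition f G P.
Proof.
move=> f0; elim: {G}_.+1 {-2}G (ltnSn #|G|) => // n IH G hG.
have [Gconn | Gsplit] := pselect (connected_on f G).
  have [-> | G0] := eqVneq G set0.
    exists set0; split => [|A|B]; rewrite ?partition_set0 ?in_set0 //.
    by rewrite subset0 => /eqP ->; rewrite big_set0 f0.
  exists [set G]; split => [|A AG|B].
  - by rewrite /partition cover1 eqxx trivIset1 inE eq_sym G0.
  - by rewrite big_set1 (setIidPl AG).
  - by rewrite inE => /eqP ->.
have [S [T GST]] : exists S T, direct_sum_split f G S T by exact: contrapT.
have [S0 T0 ST0 STG _] := GST.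
have cardST := cardsUI S T; rewrite ST0 STG cards0 in cardST.
move: S0 T0; rewrite -!card_gt0 => S0 T0.
have [P1 decP1] := IH S ltac:(lia); have [P2 decP2] := IH T ltac:(lia).
by exists (P1 :|: P2); apply: connected_decomposition_union GST decP1 decP2.
Qed.

End Connectedness.

Section Rank.
Variables (E : finType) (rk : {set E} -> nat).
Hypothesis rk_matroid : is_matroid_rank rk.
Implicit Types (A B X Y S U V D : {set E}) (P : {set {set E}}).

Lemma rk0 : rk set0 = 0.
Proof. by case: rk_matroid => rk_card _ _; move: (rk_card set0); rewrite cards0; lia. Qed.

Lemma rk_mono A B : A \subset B -> rk A <= rk B.
Proof. by case: rk_matroid => _ mono _; apply: mono. Qed.

Lemma rk_submod A B : rk (A :|: B) + rk (A :&: B) <= rk A + rk B.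
Proof. by case: rk_matroid => _ _; apply. Qed.

Lemma rk_additive_union X Y : X :&: Y = set0 -> rk (X :|: Y) = rk X + rk Y ->
  forall A, A \subset X :|: Y -> rk A = rk (A :&: X) + rk (A :&: Y).
Proof.
move=> XY0 rkXY A AXY.
have := rk_submod (A :&: X) (A :&: Y).
have -> : A :&: X :|: A :&: Y = A by set_tauto.
have -> : A :&: X :&: (A :&: Y) = set0 by set_tauto.
have := rk_submod A X; have -> : A :|: X = X :|: A :&: Y by set_tauto.
have := rk_submod (X :|: A :&: Y) Y.
have -> : X :|: A :&: Y :|: Y = X :|: Y by set_tauto.
have -> : (X :|: A :&: Y) :&: Y = A :&: Y by set_tauto.
rewrite rk0; lia.
Qed.

Lemma contr_rank0 U : contr_rank rk U set0 = 0.
Proof. by rewrite /contr_rank set0U subnn. Qed.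

Section ContractionComponent.
Variables (U D : {set E}) (P : {set {set E}}).
Hypothesis decP : connected_decomposition (contr_rank rk U) (~: U) P.
Hypothesis DP : D \in P.

Let DnU : D \subset ~: U.
Proof. by case: decP => partP _ _; apply: partitionS partP DP. Qed.

Lemma rk_split_by_component X Y1 Y2 Y3 : X \subset ~: U ->
    X :|: U = Y1 -> X :&: D :|: U = Y2 -> X :\: D :|: U = Y3 ->
  rk Y1 + rk U = rk Y2 + rk Y3.
Proof.
move=> XnU <- <- <-.
have := connected_decomposition_split (contr_rank0 U) decP DP XnU.
have -> : X :&: (~: U :\: D) = X :\: D by set_tauto.
have := rk_mono (subsetUr X U); have := rk_mono (subsetUr (X :&: D) U).
have := rk_mono (subsetUr (X :\: D) U).
rewrite /contr_rank; lia.
Qed.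

Lemma rk_compl_component : rk setT + rk U = rk (D :|: U) + rk (~: D).
Proof. by apply: (rk_split_by_component (X := ~: U)); set_tauto. Qed.

Lemma contr_connected_compl_component : contr_connected rk (~: D).
Proof.
rewrite /contr_connected setCK; case: decP => _ _ connP.
apply: connected_on_eq (connP D DP) => A AD.
have := rk_split_by_component (X := A :|: (~: U :\: D))
  (Y1 := A :|: ~: D) (Y2 := A :|: U) (Y3 := ~: D).
have -> : A :|: (~: U :\: D) \subset ~: U by set_tauto.
have -> : A :|: (~: U :\: D) :|: U = A :|: ~: D by set_tauto.
have -> : (A :|: (~: U :\: D)) :&: D :|: U = A :|: U by set_tauto.
have -> : (A :|: (~: U :\: D)) :\: D :|: U = ~: D by set_tauto.
move=> /(_ isT erefl erefl erefl); rewrite /contr_rank; lia.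
Qed.

Lemma contr_connected_in_component V : U \subset V -> contr_connected rk V ->
  ~: V :&: D != set0 -> ~: V \subset D.
Proof.
move=> UV Vconn VD.
apply: (connected_within_split (S2 := ~: D) Vconn _ _ _ VD); try set_tauto.
move=> A AnV; set W := V :\: U.
have i1 : rk (A :|: V) + rk U = rk (A :&: D :|: W :&: D :|: U) +
                                rk (A :\: D :|: W :\: D :|: U).
  by apply: (rk_split_by_component (X := A :|: W)); rewrite /W; set_tauto.
have i2 : rk (A :&: D :|: V) + rk U = rk (A :&: D :|: W :&: D :|: U) +
                                      rk (W :\: D :|: U).
  by apply: (rk_split_by_component (X := A :&: D :|: W)); rewrite /W; set_tauto.
have i3 : rk (A :&: ~: D :|: V) + rk U = rk (W :&: D :|: U) +
                                         rk (A :\: D :|: W :\: D :|: U).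
  by apply: (rk_split_by_component (X := A :&: ~: D :|: W)); rewrite /W; set_tauto.
have i4 : rk V + rk U = rk (W :&: D :|: U) + rk (W :\: D :|: U).
  by apply: (rk_split_by_component (X := W)); rewrite /W; set_tauto.
have := rk_mono (subsetUr A V); have := rk_mono (subsetUr (A :&: D) V).
have := rk_mono (subsetUr (A :&: ~: D) V).
rewrite /contr_rank; lia.
Qed.

Hypotheses (Mconn : connected_on rk setT) (Uconn : restr_connected rk U).

Lemma rk_split_compl_component_false S1 S2 :
    S1 :&: S2 = set0 -> S1 :|: S2 = ~: D -> S2 != set0 -> U \subset S1 ->
  rk (~: D) = rk S1 + rk S2 -> False.
Proof.
move=> S12 S12D S2n0 US1 rkS12.
have i1 := rk_compl_component.
have i2 : rk (S1 :|: D) + rk U = rk (D :|: U) + rk S1.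
  by apply: (rk_split_by_component (X := S1 :\: U :|: D)); set_tauto.
have rkT : rk setT = rk (S1 :|: D) + rk S2 by lia.
apply: Mconn; exists (S1 :|: D), S2; split => //; try set_tauto.
- have /set0Pn [x xD] := partition_neq0 (let: And3 p _ _ := decP in p) DP.
  by apply/set0Pn; exists x; rewrite inE xD orbT.
- move=> A _; have S1DS2 : S1 :|: D :|: S2 = setT by set_tauto.
  by apply: rk_additive_union; rewrite ?S1DS2 ?subsetT //; set_tauto.
Qed.

Lemma restr_connected_compl_component : restr_connected rk (~: D).
Proof.
move=> [S1 [S2 [S1n0 S2n0 S12 S12D rkS12]]].
have UnD : U \subset ~: D by set_tauto.
have rkD : rk (~: D) = rk S1 + rk S2.
  by rewrite rkS12 //; congr (rk _ + rk _); set_tauto.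
have [US10 | US1] := eqVneq (U :&: S1) set0.
  have US2 : U \subset S2 by set_tauto.
  by apply: (@rk_split_compl_component_false S2 S1); try set_tauto; lia.
apply: (@rk_split_compl_component_false S1 S2) => //.
apply: (connected_within_split (S2 := S2) Uconn) => //; last by rewrite S12D.
by move=> A AU; apply: rkS12; apply: subset_trans AU UnD.
Qed.

End ContractionComponent.

Lemma rk_defect_decomposition U P :
    connected_decomposition (contr_rank rk U) (~: U) P ->
  ((rk setT)%:Z - (rk U)%:Z = \sum_(D in P) ((rk setT)%:Z - (rk (~: D))%:Z))%R.
Proof.
move=> decP; have [partP fP _] := decP.
have sumP : \sum_(D in P) contr_rank rk U D = rk setT - rk U.
  rewrite [RHS](_ : _ = contr_rank rk U (~: U)); last first.
    by rewrite /contr_rank; congr (rk _ - _); set_tauto.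
  rewrite (fP _ (subxx _)); apply: eq_bigr => D DP.
  by rewrite (setIidPr (partitionS partP DP)).
rewrite (eq_bigr (fun D => Posz (contr_rank rk U D))) => [|D DP]; last first.
  have := rk_compl_component decP DP; have := rk_mono (subsetUr D U).
  rewrite /contr_rank; lia.
by rewrite -(big_morph Posz PoszD (erefl _)) sumP; have := rk_mono (subsetT U); lia.
Qed.

End Rank.

Lemma nullity_decomposition (E : finType) (rk : {set E} -> nat) S P :
  connected_decomposition rk S P -> nullity rk S = (\sum_(B in P) nullity rk B)%R.
Proof.
case=> partP rkP _; rewrite /nullity (card_partition partP) (rkP S (subxx S)).
rewrite !(big_morph Posz PoszD (erefl _)) -sumrB; apply: eq_bigr => B BP.
by rewrite (setIidPr (partitionS partP BP)).
Qed.

Section ECFamilies.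
Variables (E : finType) (rk : {set E} -> nat).
Hypothesis rk_matroid : is_matroid_rank rk.
Implicit Types (Sf F : {set {set E}}) (S A : {set E}).
Local Open Scope ring_scope.

Definition restr_conn_family : {set {set E}} := [set S | `[< restr_connected rk S >]].

Definition restr_contr_conn_family : {set {set E}} :=
  [set S | `[< restr_connected rk S /\ contr_connected rk S >]].

Lemma a_aux_moebius_rec Sf n S : a_aux rk Sf n S = moebius_rec (nullity rk) Sf n S.
Proof. by elim: n S => //= n IH S; congr (_ - _); apply: eq_bigr => T _. Qed.

Definition corank S : int := (rk setT)%:Z - (rk S)%:Z.

Lemma ec_ofE Sf :
  ec_of rk Sf = \sum_(S in Sf) corank S * moebius (nullity rk) Sf S.
Proof. by apply: eq_bigr => S _; rewrite /a_coef a_aux_moebius_rec. Qed.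

Lemma moebius_nullity_neq0 Sf S :
    (forall S C, S \in Sf -> component_of_restr rk S C -> C \in Sf) ->
  S \in Sf -> moebius (nullity rk) Sf S != 0 -> restr_connected rk S.
Proof.
move=> Sf_closed SSf mS; have rk0 := rk0 rk_matroid.
suff [] : restr_connected rk S /\ S != set0 by [].
apply: moebius_eq0 SSf mS; first by rewrite /nullity cards0 rk0.
move=> {}S {}SSf Sdisc S0; have [P decP] := connected_decomposition_exists S rk0.
have [partP _ connP] := decP; exists P; split => //.
- move=> B BP; rewrite (Sf_closed S B SSf) /=; last by exists P.
  rewrite properEneq (partitionS partP BP) andbT.
  by apply/eqP => BS; apply: Sdisc; rewrite -BS; apply: connP.
- exact: nullity_decomposition.
- move=> T _ TS Tconn T0.
  exact: connected_in_block rk0 decP Tconn (proper_sub TS) T0.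
Qed.

Lemma ec_of_restr_connected Sf :
    (forall S C, S \in Sf -> component_of_restr rk S C -> C \in Sf) ->
  ec_of rk Sf = ec_of rk (Sf :&: restr_conn_family).
Proof.
move=> Sf_closed; rewrite !ec_ofE; apply: sum_mul_moebius_subfamily.
  exact: subsetIl.
move=> S SSf; rewrite !inE SSf /= => /asboolPn Sdisc.
have [//|/(moebius_nullity_neq0 Sf_closed SSf)] := eqVneq (moebius (nullity rk) Sf S) 0.
by move/Sdisc.
Qed.

Hypothesis Mconn : connected_on rk setT.

Lemma moebius_corank_compl_neq0 F A :
    restr_contr_conn_family \subset F -> F \subset restr_conn_family ->
    A \in compl_family F ->
    moebius (fun A => corank (~: A)) (compl_family F) A != 0 ->
  contr_connected rk (~: A).
Proof.
move=> KF F_conn AF mA.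
suff [] : contr_connected rk (~: A) /\ A != set0 by [].
apply: (moebius_eq0 (good := fun A => contr_connected rk (~: A))) AF mA.
  by rewrite /corank setC0 subrr.
move=> {}A; rewrite mem_compl_family => AF Adisc A0; set U := ~: A in AF Adisc *.
have Uconn : restr_connected rk U by have := subsetP F_conn U AF; rewrite inE => /asboolP.
have [P decP] := connected_decomposition_exists (~: U) (contr_rank0 rk U).
have [partP _ connP] := decP; rewrite setCK in partP.
exists P; split => //.
- move=> D DP; rewrite mem_compl_family (subsetP KF) /=; last first.
    rewrite inE; apply/asboolP; split.
      exact: (restr_connected_compl_component rk_matroid decP DP Mconn Uconn).
    exact: (contr_connected_compl_component rk_matroid decP DP).
  rewrite properEneq (partitionS partP DP) andbT.
  apply/eqP => DA; apply: Adisc; rewrite /U -DA.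
  exact: (contr_connected_compl_component rk_matroid decP DP).
- exact: (rk_defect_decomposition rk_matroid decP).
- move=> T _ TA Tconn /set0Pn [x xT].
  have xP : x \in cover P by rewrite (cover_partition partP) (subsetP (proper_sub TA)).
  exists (pblock P x); first exact: pblock_mem.
  have UT : U \subset ~: T by rewrite setCS (proper_sub TA).
  have Tx : ~: ~: T :&: pblock P x != set0.
    by apply/set0Pn; exists x; rewrite setCK inE xT mem_pblock.
  have := contr_connected_in_component rk_matroid decP (pblock_mem xP) UT Tconn Tx.
  by rewrite setCK.
Qed.

Lemma ec_of_between F :
    restr_contr_conn_family \subset F -> F \subset restr_conn_family ->
  ec_of rk F = ec_of rk restr_contr_conn_family.
Proof.
move=> KF F_conn; rewrite !ec_ofE (sum_mul_moebius_compl _ _ F).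
rewrite (sum_mul_moebius_compl _ _ restr_contr_conn_family).
apply: sum_mul_moebius_subfamily; first exact: compl_familyS.
move=> A AF; rewrite mem_compl_family inE => /asboolPn AnK.
have [//|/(moebius_corank_compl_neq0 KF F_conn AF) Acontr] :=
  eqVneq (moebius (fun A => corank (~: A)) (compl_family F) A) 0.
move: AF; rewrite mem_compl_family => /(subsetP F_conn); rewrite inE => /asboolP Arestr.
by case: AnK.
Qed.

End ECFamilies.

Theorem theorem6p7 (E : finType) (rk : {set E} -> nat) (Sf : {set {set E}}) :
  is_matroid_rank rk ->
  connected_on rk setT ->
  (forall S : {set E}, restr_connected rk S -> contr_connected rk S -> S \in Sf) ->
  (forall S C : {set E}, S \in Sf -> component_of_restr rk S C -> C \in Sf) ->
  ec_of rk Sf = ec rk.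
Proof.
move=> rk_matroid Mconn Sf_biconn Sf_closed.
have KC : restr_contr_conn_family rk \subset restr_conn_family rk.
  by apply/subsetP => S; rewrite !inE => /asboolP[? _]; apply/asboolP.
have KSf : restr_contr_conn_family rk \subset Sf :&: restr_conn_family rk.
  rewrite subsetI KC andbT; apply/subsetP => S; rewrite inE => /asboolP[].
  exact: Sf_biconn.
rewrite /ec (ec_of_restr_connected rk_matroid Sf_closed).
rewrite (ec_of_restr_connected rk_matroid (Sf := setT)) ?setTI; last by move=> *; rewrite inE.
by rewrite !(ec_of_between rk_matroid Mconn) // subsetIr.
Qed.
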